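(* Let $L$ be a finite lattice. If the only tolerances on $L$ are $\mathrm{id}_L$ and $L^2$, then $\mathsf{C}(L)=\mathsf{Pol}_{0,1}(L)$.
   Context: $L$ has bounds $0,1$; $\mathrm{id}_L=\{(x,x):x\in L\}$. An $n$-ary aggregation function on $L$ ($n\ge1$) is a nondecreasing map $A:L^n\to L$ with $A(0,\dots,0)=0$ and $A(1,\dots,1)=1$; $\mathsf{C}(L)$ is the set of all of them. Polynomials on $L$ are functions $L^n\to L$ built from projections and constants by finitely many pointwise joins and meets; $\mathsf{Pol}_{0,1}(L)$ is the set of polynomials preserving $0$ and $1$. A tolerance on $L$ is a reflexive, symmetric binary relation $T$ such that $(a,b),(c,d)\in T$ imply $(a\vee c,b\vee d),(a\wedge c,b\wedge d)\in T$. *)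

From HB Require Import structures.
From mathcomp Require Import all_boot all_order.
Set Implicit Arguments. Unset Strict Implicit. Unset Printing Implicit Defensive.
Import Order.TTheory.
Local Open Scope order_scope.

(* A finite lattice L is taken as a nonempty finite lattice (finTBLatticeType),
   whose bottom/top are the bounds 0 = \bot and 1 = \top.
   n-ary functions are maps ('I_n -> L) -> L. *)

Definition aggregation {d} {L : finTBLatticeType d} (n : nat)
  (A : ('I_n -> L) -> L) : Prop :=
  [/\ (forall x y : 'I_n -> L, (forall i, x i <= y i) -> A x <= A y),
      A (fun _ => \bot) = \bot &
      A (fun _ => \top) = \top].

Inductive lpterm (T : Type) (n : nat) : Type :=
  | LPvar of 'I_n
  | LPconst of T
  | LPjoin of lpterm T n & lpterm T n
  | LPmeet of lpterm T n & lpterm T n.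

Fixpoint lpeval {d} {L : finTBLatticeType d} {n : nat} (t : lpterm L n)
  (x : 'I_n -> L) : L :=
  match t with
  | LPvar i => x i
  | LPconst c => c
  | LPjoin t1 t2 => lpeval t1 x `|` lpeval t2 x
  | LPmeet t1 t2 => lpeval t1 x `&` lpeval t2 x
  end.

Definition polynomial {d} {L : finTBLatticeType d} (n : nat)
  (f : ('I_n -> L) -> L) : Prop :=
  exists t : lpterm L n, forall x, f x = lpeval t x.

Definition polynomial01 {d} {L : finTBLatticeType d} (n : nat)
  (f : ('I_n -> L) -> L) : Prop :=
  [/\ polynomial f, f (fun _ => \bot) = \bot & f (fun _ => \top) = \top].

Definition tolerance {d} {L : finTBLatticeType d} (T : L -> L -> Prop) : Prop :=
  [/\ (forall x, T x x),
      (forall x y, T x y -> T y x) &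
      (forall a b c e, T a b -> T c e -> T (a `|` c) (b `|` e) /\ T (a `&` c) (b `&` e))].

From mathcomp Require Import all_boot all_order.
Set Implicit Arguments. Unset Strict Implicit. Unset Printing Implicit Defensive.
Import Order.TTheory.
Local Open Scope order_scope.

(* Polynomials are monotone, so only the converse needs work.  We work with
   the closure [poly_closure G] of a set G of functions X -> L under constants
   and pointwise joins and meets; unary polynomials are the closure of the
   identity, n-ary polynomials the closure of the projections.
   1. For u < b, the relation "p u <= x /\ y and x \/ y <= p b for some unary
      polynomial p" is a tolerance containing (u, b); it is therefore the full
      relation, which yields a unary polynomial sending u to 0 and b to 1.
   2. Meeting finitely many such separators (L is finite) gives the threshold
      function of b, equal to 1 on the up-set of b and 0 elsewhere.
   3. Meeting thresholds along the coordinates gives the indicator [box a] of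
      the up-set of a point a of L^n, and every monotone A satisfies the normal
      form A x = \join_a (A a /\ box a x), which is an n-ary polynomial. *)

Section PolyClosure.
Context {d : Order.disp_t} {L : finTBLatticeType d}.

(* Functions X -> L generated by G and the constants under pointwise join
   and meet; the last constructor makes the class extensional. *)
Inductive poly_closure (X : Type) (G : (X -> L) -> Prop) : (X -> L) -> Prop :=
| pc_gen g : G g -> poly_closure G g
| pc_const (c : L) : poly_closure G (fun _ => c)
| pc_join f g : poly_closure G f -> poly_closure G g ->
    poly_closure G (fun x => f x `|` g x)
| pc_meet f g : poly_closure G f -> poly_closure G g ->
    poly_closure G (fun x => f x `&` g x)
| pc_ext f g : poly_closure G f -> f =1 g -> poly_closure G g.

Lemma pc_bigmeet X (G : (X -> L) -> Prop) I (r : seq I) (F : I -> X -> L) :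
  (forall i, poly_closure G (F i)) ->
  poly_closure G (fun x => \meet_(i <- r) F i x).
Proof.
move=> PF; elim: r => [|i r IHr].
  by apply: pc_ext (pc_const G \top) _ => x; rewrite big_nil.
by apply: pc_ext (pc_meet (PF i) IHr) _ => x; rewrite big_cons.
Qed.

Lemma pc_bigjoin X (G : (X -> L) -> Prop) I (r : seq I) (F : I -> X -> L) :
  (forall i, poly_closure G (F i)) ->
  poly_closure G (fun x => \join_(i <- r) F i x).
Proof.
move=> PF; elim: r => [|i r IHr].
  by apply: pc_ext (pc_const G \bot) _ => x; rewrite big_nil.
by apply: pc_ext (pc_join (PF i) IHr) _ => x; rewrite big_cons.
Qed.

Definition unary_poly : (L -> L) -> Prop := poly_closure (fun g => g =1 id).

Lemma unary_poly_comp X (G : (X -> L) -> Prop) p h :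
  unary_poly p -> poly_closure G h -> poly_closure G (fun x => p (h x)).
Proof.
move=> Pp Ph; elim: Pp => {p} [g Eg|c|f g _ Hf _ Hg|f g _ Hf _ Hg|f g _ Hf Efg].
- by apply: pc_ext Ph _ => x; rewrite Eg.
- exact: pc_const.
- exact: pc_join.
- exact: pc_meet.
- by apply: pc_ext Hf _ => x; rewrite Efg.
Qed.

Definition projection n (g : ('I_n -> L) -> L) : Prop :=
  exists i, forall x, g x = x i.

Lemma poly_closure_polynomial n (f : ('I_n -> L) -> L) :
  poly_closure (@projection n) f -> polynomial f.
Proof.
elim=> {f} [g [i Eg]|c|f g _ [t1 E1] _ [t2 E2]|f g _ [t1 E1] _ [t2 E2]|f g _ [t Et] Efg].
- by exists (LPvar L i) => x; rewrite Eg.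
- by exists (LPconst n c).
- by exists (LPjoin t1 t2) => x /=; rewrite E1 E2.
- by exists (LPmeet t1 t2) => x /=; rewrite E1 E2.
- by exists t => x; rewrite -Efg.
Qed.

Lemma lpeval_mono n (t : lpterm L n) (x y : 'I_n -> L) :
  (forall i, x i <= y i) -> lpeval t x <= lpeval t y.
Proof.
by move=> xy; elim: t => [i|c|t1 H1 t2 H2|t1 H1 t2 H2] //=; rewrite ?leU2 ?leI2.
Qed.

End PolyClosure.

Section Separation.
Context {d : Order.disp_t} {L : finTBLatticeType d}.

Definition squeezed (u b x y : L) : Prop :=
  exists p : L -> L, unary_poly p /\ p u <= x `&` y /\ x `|` y <= p b.

Lemma squeezed_tolerance u b : tolerance (squeezed u b).
Proof.
split.
- move=> x; exists (fun _ => x); split; first exact: pc_const.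
  by rewrite meetxx joinxx.
- by move=> x y [p [Pp [lo hi]]]; exists p; rewrite meetC joinC.
move=> a a' c c' [p [Pp [lo hi]]] [q [Pq [lo' hi']]].
move: lo hi lo' hi'; rewrite !lexI !leUx.
move=> /andP[pa pa'] /andP[ap a'p] /andP[qc qc'] /andP[cq c'q].
split.
- exists (fun x => p x `|` q x); split; first exact: pc_join.
  by rewrite lexI leUx !leU2.
- exists (fun x => p x `&` q x); split; first exact: pc_meet.
  by rewrite lexI leUx !leI2.
Qed.

Hypothesis simple_tol : forall T : L -> L -> Prop, tolerance T ->
  (forall x y, T x y <-> x = y) \/ (forall x y, T x y).

Lemma separation u b : u < b ->
  exists p : L -> L, unary_poly p /\ p u = \bot /\ p b = \top.
Proof.
move=> ub; have ub' := ltW ub.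
have Sub : squeezed u b u b.
  exists id; split; first exact: pc_gen.
  by rewrite (meet_l ub') (join_r ub').
case: (simple_tol (squeezed_tolerance u b)) => [Sid|Sall].
  by move: ub; rewrite ((Sid _ _).1 Sub) ltxx.
have [p [Pp [lo hi]]] := Sall \bot \top.
exists p; split=> //; split; apply/eqP.
  by rewrite -lex0 -(meet0x \top).
by rewrite eq_le lex1 -(join0x \top).
Qed.

(* A point x outside the up-set of b is sent to 0 by a unary polynomial that
   is 1 on the whole up-set of b: separate x /\ b < b, after meeting with b. *)
Lemma separate_upset b x : ~~ (b <= x) ->
  exists p : L -> L, unary_poly p /\ (forall y, b <= y -> p y = \top) /\ p x = \bot.
Proof.
move=> bx.
have xb_lt : x `&` b < b.
  by rewrite lt_def leIr andbT; apply: contraNneq bx => ->; exact: leIl.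
have [p [Pp [p0 p1]]] := separation xb_lt.
exists (fun y => p (y `&` b)); split.
  by apply: unary_poly_comp Pp (pc_meet (pc_gen _) (pc_const _ _)).
by split=> // y le_by; rewrite (meet_r le_by).
Qed.

Definition threshold (b y : L) : L := if b <= y then \top else \bot.

Lemma threshold_unary_poly b : unary_poly (threshold b).
Proof.
suff [q [Pq [q1 q0]]] : exists q : L -> L, unary_poly q /\
    (forall y, b <= y -> q y = \top) /\
    (forall x, x \in enum L -> ~~ (b <= x) -> q x = \bot).
  apply: pc_ext Pq _ => y; rewrite /threshold; case: ifPn => [/q1|/q0]//.
  by apply; rewrite mem_enum.
elim: (enum L) => [|x s [q [Pq [q1 q0]]]].
  by exists (fun _ => \top); split; [exact: pc_const|].
have [bx|/separate_upset[p [Pp [p1 p0]]]] := boolP (b <= x).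
  exists q; do 2 split=> //.
  by move=> y /[!inE] /predU1P[->|/q0]//; rewrite bx.
exists (fun y => q y `&` p y); split; first exact: pc_meet.
split=> [y le_by|y /[!inE] /predU1P[->|ys] nby]; first by rewrite q1 ?p1 ?meetxx.
  by rewrite p0 meetx0.
by rewrite q0 ?meet0x.
Qed.

End Separation.

Section NormalForm.
Context {d : Order.disp_t} {L : finTBLatticeType d} (n : nat).

Definition box (a x : 'I_n -> L) : L := \meet_(i < n) threshold (a i) (x i).

Lemma box_top a x : (forall i, a i <= x i) -> box a x = \top.
Proof. by move=> ax; rewrite /box big1 // => i _; rewrite /threshold ax. Qed.

Lemma box_bot a x i : ~~ (a i <= x i) -> box a x = \bot.
Proof.
move=> ax; apply/eqP; rewrite -lex0.
apply: (meets_max_seq (x := i)); rewrite ?mem_index_enum //.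
by rewrite /threshold (negbTE ax).
Qed.

Lemma monotone_normal_form (A : ('I_n -> L) -> L) :
  (forall x y, (forall i, x i <= y i) -> A x <= A y) ->
  forall x, A x = \join_(a : {ffun 'I_n -> L}) (A a `&` box a x).
Proof.
move=> monoA x; apply: le_anti; apply/andP; split.
  apply: (joins_min_seq (x := finfun x)); rewrite ?mem_index_enum //.
  rewrite box_top => [|i]; last by rewrite ffunE.
  by rewrite meetx1 monoA // => i; rewrite ffunE.
apply/joinsP_seq => a _ _.
have [ax|/existsP[i /box_bot->]] := boolP [forall i, a i <= x i].
  by apply: le_trans (leIl _ _) (monoA _ _ _) => i; exact: (forallP ax).
by rewrite meetx0 le0x.
Qed.

Lemma box_poly : (forall b : L, unary_poly (threshold b)) ->
  forall a, poly_closure (@projection _ L n) (box a).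
Proof.
move=> thr_poly a; apply: pc_bigmeet => i; apply: unary_poly_comp => //.
by apply: pc_gen; exists i.
Qed.

End NormalForm.

Theorem mainTheorem4 (d : Order.disp_t) (L : finTBLatticeType d) :
  (forall T : L -> L -> Prop, tolerance T ->
     (forall x y, T x y <-> x = y) \/ (forall x y, T x y)) ->
  forall (n : nat), (0 < n)%N ->
    forall A : ('I_n -> L) -> L, aggregation A <-> polynomial01 A.
Proof.
move=> simple_tol n _ A; split=> [[monoA A0 A1]|[[t Et] A0 A1]]; last first.
  by split=> // x y xy; rewrite !Et; apply: lpeval_mono.
split=> //; apply: poly_closure_polynomial.
apply: pc_ext (fun x => esym (monotone_normal_form monoA x)).
apply: pc_bigjoin => a; apply: pc_meet; first exact: pc_const.
exact/box_poly/threshold_unary_poly.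
Qed.
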